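(* Let $\alpha \in [0,1)$ and $k \in \{0,\dots,m-1\}$. For the homogeneous sample $\mathbf{S}_k = (S_k,\dots,S_k) \in \Omega$, $$B^*(\mathbf{S}_k) = S_{\min}\left(1 - \sqrt[n]{\alpha}\right) + S_k \sqrt[n]{\alpha},$$ where $B^*(\mathbf{S}_k)$ is the highest value assigned to $\mathbf{S}_k$ by any valid bound.
   Context: Fix integers $m \ge 2$, $n \ge 1$ and reals $S_{\min} < S_{\max}$; $S = \{S_0,\dots,S_{m-1}\}$ with $S_k = S_{\min} + k\frac{S_{\max}-S_{\min}}{m-1}$. $\mathcal{F}$ is the set of probability distributions on $S$; $E[F]$ is the mean. $\Omega$ is the set of samples of size $n$ from $S$, identified with their sorted versions. For $F \in \mathcal{F}$, $\mathbf{X}$ denotes a sample of $n$ i.i.d. draws from $F$. A bound is a function $B:\Omega\to\mathbb{R}$; it is valid (at level $1-\alpha$) if $P_F[B(\mathbf{X}) \le E[F]] \ge 1-\alpha$ for every $F \in \mathcal{F}$. *)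

From HB Require Import structures.
From mathcomp Require Import all_boot all_order all_algebra all_fingroup.
From mathcomp Require Import reals exp.
Set Implicit Arguments. Unset Strict Implicit. Unset Printing Implicit Defensive.
Import Order.TTheory GRing.Theory Num.Theory.
Local Open Scope ring_scope.

Section Defs.
Variable R : realType.
Variables (m n : nat) (Smin Smax : R).

Definition Spt (k : 'I_m) : R := Smin + k%:R * (Smax - Smin) / (m.-1)%:R.

Definition is_distr (F : 'I_m -> R) : Prop :=
  (forall k, 0 <= F k) /\ \sum_(k < m) F k = 1.

Definition meanF (F : 'I_m -> R) : R := \sum_(k < m) F k * Spt k.

Definition sample := {ffun 'I_n -> 'I_m}.

Definition probF (F : 'I_m -> R) (A : pred sample) : R :=
  \sum_(x : sample | A x) \prod_(i < n) F (x i).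

(* A bound on Omega (samples identified with their sorted versions) is the
   same as a function on ordered samples invariant under permutations. *)
Definition sym_bound (B : sample -> R) : Prop :=
  forall (s : 'S_n) (x : sample), B [ffun i => x (s i)] = B x.

Definition valid (alpha : R) (B : sample -> R) : Prop :=
  sym_bound B /\
  forall F, is_distr F -> 1 - alpha <= probF F (fun x => B x <= meanF F).

Definition homog (k : 'I_m) : sample := [ffun _ => k].

End Defs.

From HB Require Import structures.
From mathcomp Require Import all_boot all_order all_algebra all_fingroup.
From mathcomp Require Import reals exp.
From mathcomp Require Import ring lra.
Import Order.TTheory GRing.Theory Num.Theory.
Local Open Scope ring_scope.
Set Implicit Arguments. Unset Strict Implicit.

(* Write r = alpha^(1/n) and d = S_k - Smin.  Every distribution F has mean at
   least Smin + F(S_k) d, and the sample S_k is drawn with probability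
   F(S_k)^n.  The bound equal to Smin + r d on S_k and to Smin elsewhere can
   only fail on S_k, and only when F(S_k) < r, i.e. with probability at most
   r^n = alpha; so it is valid.  Conversely, a valid bound exceeding
   Smin + r d at S_k fails there for the distribution putting a mass slightly
   above r on S_k and the rest on S_0 = Smin, whose probability of drawing S_k
   exceeds alpha. *)

Section SampleProbability.
Variables (R : realType) (m n : nat).
Variable F : 'I_m -> R.
Hypothesis F_distr : is_distr F.

Lemma probF_predT : probF F (@predT (sample m n)) = 1.
Proof.
have [_ F1] := F_distr.
rewrite /probF /sample -(bigA_distr_bigA (fun (_ : 'I_n) (j : 'I_m) => F j)).
by rewrite big1.
Qed.

Lemma probF_predC (A : pred (sample m n)) :
  probF F (predC A) = 1 - probF F A.
Proof.
by rewrite -probF_predT /probF [X in _ = X - _](bigID A) /= addrAC subrr add0r.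
Qed.

Lemma probF_subset (A A' : pred (sample m n)) :
  {subset A <= A'} -> probF F A <= probF F A'.
Proof.
move=> AA'; have [F0 _] := F_distr.
rewrite /probF [leLHS]big_mkcond [leRHS]big_mkcond /=; apply: ler_sum => x _.
case: ifP => [Ax | _]; first by have -> : A' x by exact: AA'.
by case: ifP => // _; apply: prodr_ge0.
Qed.

Lemma probF_pred1 (h : sample m n) : probF F (pred1 h) = \prod_(i < n) F (h i).
Proof. by rewrite /probF big_pred1_eq. Qed.

Lemma probF_homog (k : 'I_m) : probF F (pred1 (homog n k)) = F k ^+ n.
Proof.
rewrite probF_pred1 (eq_bigr (fun _ => F k)) => [|i _]; last by rewrite ffunE.
by rewrite prodr_const card_ord.
Qed.

Lemma probF_ge_compl1 (A : pred (sample m n)) (h : sample m n) :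
  (forall x, x != h -> A x) -> 1 - probF F (pred1 h) <= probF F A.
Proof. by move=> hA; rewrite -probF_predC; apply: probF_subset => x /hA. Qed.

Lemma probF_le_compl1 (A : pred (sample m n)) (h : sample m n) :
  ~~ A h -> probF F A <= 1 - probF F (pred1 h).
Proof.
move=> Ah; rewrite -probF_predC; apply: probF_subset => x Ax /=.
by apply: contraNneq Ah => <-.
Qed.

End SampleProbability.

Section SupportMean.
Variables (R : realType) (m : nat) (Smin Smax : R).
Hypothesis le_min_max : Smin <= Smax.
Local Notation Spt := (Spt Smin Smax).
Local Notation meanF := (meanF Smin Smax).

Lemma Spt_ge_min (j : 'I_m) : Smin <= Spt j.
Proof.
rewrite /Spt lerDl; apply: divr_ge0 => //.
by apply: mulr_ge0 => //; rewrite subr_ge0.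
Qed.

Lemma Spt_val0 (j : 'I_m) : val j = 0%N -> Spt j = Smin.
Proof. by move=> j0; rewrite /Spt j0 !mul0r addr0. Qed.

Lemma meanF_ge (F : 'I_m -> R) (k : 'I_m) : is_distr F ->
  Smin + F k * (Spt k - Smin) <= meanF F.
Proof.
move=> [F0 F1]; rewrite /meanF (bigD1 k) //=.
have rest : (1 - F k) * Smin <= \sum_(j < m | j != k) F j * Spt j.
  rewrite -F1 (bigD1 k) //= addrC addrK mulr_suml.
  by apply: ler_sum => j _; apply: ler_wpM2l; [apply: F0 | apply: Spt_ge_min].
lra.
Qed.

End SupportMean.

Lemma sumr_pred1_natr (R : pzSemiRingType) (I : finType) (f : I -> R) (i0 : I) :
  \sum_i (i == i0)%:R * f i = f i0.
Proof.
under eq_bigr do rewrite mulr_natl mulrb.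
by rewrite -big_mkcond big_pred1_eq.
Qed.

Section TwoPoint.
Variables (R : realType) (m : nat) (j z : 'I_m) (p : R).
Hypotheses (p_ge0 : 0 <= p) (p_le1 : p <= 1).

Definition two_point (i : 'I_m) : R :=
  (i == j)%:R * p + (i == z)%:R * (1 - p).

Lemma two_point_distr : is_distr two_point.
Proof.
split=> [i|]; first by rewrite /two_point addr_ge0 ?mulr_ge0 ?subr_ge0.
rewrite /two_point big_split /=.
by rewrite (sumr_pred1_natr (fun=> p)) (sumr_pred1_natr (fun=> 1 - p)) addrC subrK.
Qed.

Lemma two_point_ge : p <= two_point j.
Proof. by rewrite /two_point eqxx mul1r lerDl mulr_ge0 ?subr_ge0. Qed.

Lemma meanF_two_point (Smin Smax : R) :
  meanF Smin Smax two_point = p * Spt Smin Smax j + (1 - p) * Spt Smin Smax z.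
Proof.
rewrite /meanF /two_point.
under eq_bigr => i _ do rewrite mulrDl -!mulrA.
by rewrite big_split /= !sumr_pred1_natr.
Qed.

End TwoPoint.

Lemma exists_gt_mul_lt (R : realFieldType) (r d b : R) :
  r < 1 -> 0 <= d -> r * d < b -> exists2 p, r < p <= 1 & p * d < b.
Proof.
move=> r_lt1 d_ge0 rd_lt_b; pose e := (b - r * d) / (d + 1).
have e_gt0 : 0 < e by apply: divr_gt0; lra.
have eE : e * (d + 1) = b - r * d by rewrite divfK //; apply: lt0r_neq0; lra.
exists (Num.min 1 (r + e)); first by rewrite lt_min ge_min lexx r_lt1 ltrDl e_gt0.
apply: le_lt_trans (_ : (r + e) * d < b).
  by apply: ler_wpM2r => //; rewrite ge_min lexx orbT.
nra.
Qed.

Section PowR.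
Variable R : realType.

Lemma powR_invn_expr (a : R) (n : nat) : 0 <= a -> (0 < n)%N ->
  a `^ n%:R^-1 ^+ n = a.
Proof.
move=> a_ge0 n_gt0; rewrite -powR_mulrn ?powR_ge0 // -powRrM mulVf ?powRr1 //.
by rewrite pnatr_eq0 -lt0n.
Qed.

Lemma powR_invn_lt1 (a : R) (n : nat) : 0 <= a -> a < 1 -> (0 < n)%N ->
  a `^ n%:R^-1 < 1.
Proof.
move=> a_ge0 a_lt1 n_gt0; suff : a `^ n%:R^-1 < 1 `^ n%:R^-1 by rewrite powR1.
by apply: gt0_ltr_powR; rewrite ?nnegrE ?invr_gt0 ?ltr0n.
Qed.

End PowR.

Lemma perm_sample_eq_homog (m n : nat) (k : 'I_m) (s : 'S_n) (x : sample m n) :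
  ([ffun i => x (s i)] == homog n k) = (x == homog n k).
Proof.
apply/eqP/eqP => [xs_k | ->]; apply/ffunP => i; rewrite !ffunE //.
by have := congr1 (fun y : sample m n => y (s^-1 i)%g) xs_k; rewrite !ffunE permKV.
Qed.

Section HomogeneousBound.
Variables (R : realType) (m n : nat) (Smin Smax alpha r : R) (k : 'I_m).
Hypotheses (le_min_max : Smin <= Smax) (r_ge0 : 0 <= r) (r_lt1 : r < 1).
Hypothesis r_expn : r ^+ n = alpha.
Local Notation Sk := (Spt Smin Smax k).
Local Notation meanF := (meanF Smin Smax).

Definition homog_bound (x : sample m n) : R :=
  if x == homog n k then Smin + r * (Sk - Smin) else Smin.

Lemma homog_bound_valid : valid Smin Smax alpha homog_bound.
Proof.
split=> [s x | F F_distr]; first by rewrite /homog_bound perm_sample_eq_homog.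
have dk_ge0 : 0 <= Sk - Smin by rewrite subr_ge0 Spt_ge_min.
have mean_ge := meanF_ge le_min_max k F_distr.
have [F0 _] := F_distr; have Fk0 := F0 k.
pose A : pred (sample m n) := fun x => homog_bound x <= meanF F.
have off_homog x : x != homog n k -> A x.
  by move=> /negbTE x_k; rewrite /A /homog_bound x_k; nra.
have [Fk_le_r | r_lt_Fk] := lerP (F k) r.
  apply: le_trans (probF_ge_compl1 F_distr off_homog).
  rewrite probF_homog // lerD2l lerN2 -r_expn.
  by apply: lerXn2r; rewrite ?nnegrE.
have everywhere x : A x by rewrite /A /homog_bound; case: eqP => _; nra.
have alpha_ge0 : 0 <= alpha by rewrite -r_expn exprn_ge0.
apply: le_trans (probF_subset F_distr (A := predT) _) => [|x _]; last exact: everywhere.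
by rewrite probF_predT //; lra.
Qed.

Lemma valid_le_homog_bound (B : sample m n -> R) : (0 < n)%N ->
  valid Smin Smax alpha B -> B (homog n k) <= homog_bound (homog n k).
Proof.
move=> n_gt0 [_ B_valid]; rewrite /homog_bound eqxx leNgt; apply/negP => lt_B.
have dk_ge0 : 0 <= Sk - Smin by rewrite subr_ge0 Spt_ge_min.
have [p /andP[r_lt_p p_le1] pd_lt] : exists2 p, r < p <= 1 &
    p * (Sk - Smin) < B (homog n k) - Smin.
  by apply: exists_gt_mul_lt => //; lra.
have p_ge0 : 0 <= p := le_trans r_ge0 (ltW r_lt_p).
have m_gt0 : (0 < m)%N by apply: leq_ltn_trans (ltn_ord k).
pose z : 'I_m := Ordinal m_gt0.
pose F := two_point k z p.
have F_distr : is_distr F by apply: two_point_distr.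
have B_fails : ~~ (B (homog n k) <= meanF F).
  rewrite -ltNge meanF_two_point (Spt_val0 Smin Smax (j := z)) //; lra.
have := le_trans (B_valid F F_distr) (probF_le_compl1 F_distr B_fails).
rewrite probF_homog // lerD2l lerN2 -r_expn; apply/negP; rewrite -ltNge.
apply: lt_le_trans (_ : p ^+ n <= F k ^+ n); first by rewrite ltrXn2r // -lt0n.
have p_le_Fk : p <= F k by apply: two_point_ge.
by apply: lerXn2r; rewrite ?nnegrE // (le_trans p_ge0).
Qed.

End HomogeneousBound.

Theorem theorem2 (R : realType) (m n : nat) (Smin Smax : R)
  (hm : (2 <= m)%N) (hn : (1 <= n)%N) (hS : Smin < Smax)
  (alpha : R) (ha0 : 0 <= alpha) (ha1 : alpha < 1) (k : 'I_m) :
  let r := powR alpha (n%:R)^-1 in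
  let c := Smin * (1 - r) + Spt Smin Smax k * r in
  (exists B : sample m n -> R, valid Smin Smax alpha B /\ B (homog n k) = c) /\
  (forall B : sample m n -> R, valid Smin Smax alpha B -> B (homog n k) <= c).
Proof.
move=> r c.
have le_min_max := ltW hS.
have r_ge0 : 0 <= r := powR_ge0 _ _.
have r_lt1 : r < 1 by apply: powR_invn_lt1.
have r_expn : r ^+ n = alpha by apply: powR_invn_expr.
pose B0 : sample m n -> R := homog_bound Smin Smax r k.
have B0_homog : B0 (homog n k) = c by rewrite /B0 /homog_bound eqxx /c; ring.
split; first by exists B0; split => //; apply: homog_bound_valid.
move=> B B_valid; rewrite -B0_homog.
exact: valid_le_homog_bound le_min_max r_ge0 r_lt1 r_expn B hn B_valid.
Qed.
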